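(* Let $f:\mathbb{R}^n\to\mathbb{R}$ be convex and continuously differentiable, and let $w^*\in\Delta^n$ be a minimizer of $f$ over $\Delta^n$. Let $T>0$ and let $t\mapsto w^t$, $t\in[0,T]$, be continuously differentiable, take values in $\operatorname{int}(\Delta^n)$, start at $w^0=(1/n,\ldots,1/n)$, and satisfy the Cauchy-Simplex gradient flow $$\frac{dw^t}{dt} = -\, w^t\odot\Big(\nabla f(w^t) - \big(w^t\cdot\nabla f(w^t)\big)\mathbb{1}\Big).$$ Then $$f(w^T)-f(w^* )\le \frac{\log(n)}{T}.$$
   Context: $\Delta^n=\{w\in\mathbb{R}^n : \sum_i w_i=1,\ w_i\ge 0\}$ is the probability simplex and $\operatorname{int}(\Delta^n)$ denotes the points of $\Delta^n$ with all coordinates strictly positive. $\odot$ denotes componentwise multiplication and $\mathbb{1}$ the all-ones vector. *)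

From HB Require Import structures.
From mathcomp Require Import all_boot all_order all_algebra.
From mathcomp Require Import all_classical all_reals all_analysis.
Set Implicit Arguments. Unset Strict Implicit. Unset Printing Implicit Defensive.
Import Order.TTheory GRing.Theory Num.Theory.
Import numFieldNormedType.Exports.
Local Open Scope ring_scope.
Local Open Scope classical_set_scope.

Definition dotv (R : realType) (n : nat) (a b : 'rV[R]_n) : R :=
  \sum_(i < n) a ord0 i * b ord0 i.

Definition simplex (R : realType) (n : nat) : set 'rV[R]_n :=
  [set w | \sum_(i < n) w ord0 i = 1 /\ forall i, 0 <= w ord0 i].

Definition simplex_int (R : realType) (n : nat) : set 'rV[R]_n :=
  [set w | \sum_(i < n) w ord0 i = 1 /\ forall i, 0 < w ord0 i].

Definition convex_fun (R : realType) (n : nat) (f : 'rV[R]_n -> R) : Prop :=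
  forall (x y : 'rV[R]_n) (l : R), 0 <= l <= 1 ->
    f (l *: x + (1 - l) *: y) <= l * f x + (1 - l) * f y.

Definition grad (R : realType) (n : nat) (f : 'rV[R]_n -> R) (x : 'rV[R]_n)
  : 'rV[R]_n :=
  \row_(i < n) ('D_(delta_mx ord0 i) f x).

Definition C1 (R : realType) (n : nat) (f : 'rV[R]_n -> R) : Prop :=
  (forall x, differentiable f x) /\ continuous (grad f).

Definition cs_field (R : realType) (n : nat) (f : 'rV[R]_n -> R) (w : 'rV[R]_n)
  : 'rV[R]_n :=
  \row_(i < n) (- (w ord0 i * (grad f w ord0 i - dotv w (grad f w)))).

From HB Require Import structures.
From mathcomp Require Import all_boot all_order all_algebra.
From mathcomp Require Import all_classical all_reals all_analysis.
From mathcomp Require Import ring lra.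
Set Implicit Arguments. Unset Strict Implicit. Unset Printing Implicit Defensive.
Import Order.TTheory GRing.Theory Num.Theory.
Import numFieldNormedType.Exports.
Local Open Scope ring_scope.
Local Open Scope classical_set_scope.

(* For a point v of the simplex, the potential
     V(t) = H(v, w^t) + t (f(w^t) - f(v)),   H(v, w) = - sum_i v_i log w_i,
   is nonincreasing along the flow. The cross entropy H(v, w^t) changes at rate
   (v - w^t).grad f(w^t) <= f(v) - f(w^t) by convexity, which cancels the
   derivative of the factor t, and f(w^t) is itself nonincreasing because
   d/dt f(w^t) = - sum_i w_i (d_i f - w.grad f)^2 is minus a variance. Since
   V(0) = log n for the uniform start and H >= 0 on the simplex, we get
   T (f(w^T) - f(v)) <= V(T) <= log n. *)

Section Gradient.
Variables (R : realType) (n : nat).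
Implicit Types (f : 'rV[R]_n -> R) (x y : 'rV[R]_n).

Lemma dotvBl x y (z : 'rV[R]_n) : dotv (x - y) z = dotv x z - dotv y z.
Proof. by rewrite /dotv -sumrB; apply: eq_bigr => i _; rewrite !mxE mulrBl. Qed.

Lemma diff_grad f x y : differentiable f x -> 'd f x y = dotv y (grad f x).
Proof.
move=> df; rewrite {1}(row_sum_delta y) linear_sum.
by apply: eq_bigr => i _; rewrite linearZ /= mxE -deriveE.
Qed.

Lemma is_derive_comp_grad f (u : R -> 'rV[R]_n) t du :
  differentiable f (u t) -> is_derive t 1 u du ->
  is_derive t 1 (f \o u) (dotv du (grad f (u t))).
Proof.
move=> df [du_ex <-].
have du_diff : differentiable u t by apply/derivable1_diffP.
have dfu : differentiable (f \o u) t by exact: differentiable_comp.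
apply: DeriveDef; first exact/derivable1_diffP.
by rewrite -diff_grad // !deriveE // diff_comp.
Qed.

Lemma convex_grad_le f x y : convex_fun f -> differentiable f x ->
  dotv (y - x) (grad f x) <= f y - f x.
Proof.
move=> f_cvx df; rewrite -diff_grad // -deriveE //.
have dfxy : derivable f x (y - x) by exact: diff_derivable.
rewrite /derive; set G := (fun h : R => _).
have G_right : G @ 0^'+ --> lim (G @ 0^').
  apply: cvg_trans dfxy => P [e /= e0 eP]; exists e => // z zx z0.
  by apply: eP => //; rewrite gt_eqF.
apply: (cvgr_to_le G_right); near=> h.
have h0 : 0 < h by near: h; exact: nbhs_right_gt.
have h1 : h <= 1 by near: h; exact: nbhs_right_le.
have := f_cvx y x h; rewrite (ltW h0) h1 => /(_ isT) f_chord.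
rewrite /G /= /shift -[X in _ <= X](mulKf (lt0r_neq0 h0)).
rewrite [_ *: _]/(_ * _) ler_pM2l ?invr_gt0 // lerBlDr.
have -> : h *: (y - x) + x = h *: y + (1 - h) *: x.
  by rewrite scalerBr scalerBl scale1r -addrA [_ + x]addrC.
by rewrite (le_trans f_chord) // mulrBl mul1r mulrBr addrA addrAC.
Unshelve. all: by end_near.
Qed.

End Gradient.

Section CrossEntropy.
Variables (R : realType) (n : nat).
Implicit Types (v w : 'rV[R]_n).

Definition cross_entropy v w : R := - \sum_(i < n) v ord0 i * ln (w ord0 i).

Lemma simplex_dim_gt0 v : simplex v -> (0 < n)%N.
Proof.
by case: n v => [|//] v [+ _]; rewrite big_ord0 => /esym/eqP; rewrite oner_eq0.
Qed.

Lemma simplex_int_le1 w i : simplex_int w -> w ord0 i <= 1.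
Proof.
move=> [<- w_gt0]; rewrite (bigD1 i) //= lerDl.
by apply: sumr_ge0 => j _; exact: ltW.
Qed.

Lemma cross_entropy_ge0 v w : simplex v -> simplex_int w -> 0 <= cross_entropy v w.
Proof.
move=> [_ v_ge0] w_int; rewrite oppr_ge0; apply: sumr_le0 => i _.
by apply: mulr_ge0_le0 => //; apply: ln_le0; exact: simplex_int_le1.
Qed.

Lemma cross_entropy_uniform v :
  simplex v -> cross_entropy v (const_mx n%:R^-1) = ln n%:R.
Proof.
move=> v_simplex; have [v_sum _] := v_simplex.
have n_gt0 : (0 < n%:R :> R) by rewrite ltr0n; exact: simplex_dim_gt0 v_simplex.
rewrite /cross_entropy; under eq_bigr do rewrite mxE lnV ?posrE // mulrN.
by rewrite sumrN opprK -mulr_suml v_sum mul1r.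
Qed.

Lemma cross_entropy_continuous v w : (forall i, 0 < w ord0 i) ->
  {for w, continuous (cross_entropy v)}.
Proof.
move=> w_gt0; apply: continuousN.
apply: (cvg_big (F := nbhs w) add_continuous) => i _.
apply: cvgM; first exact: cvg_cst.
exact: continuous_comp (@coord_continuous R 1 n ord0 i w) (continuous_ln (w_gt0 i)).
Qed.

Lemma is_derive_cross_entropy v (u : R -> 'rV[R]_n) t du :
  (forall i, 0 < u t ord0 i) -> is_derive t 1 u du ->
  is_derive t 1 (cross_entropy v \o u)
    (- \sum_(i < n) v ord0 i * (du ord0 i / u t ord0 i)).
Proof.
move=> u_gt0 [u_ex du_eq].
have du_coord i : is_derive t 1 (fun s => u s ord0 i) (du ord0 i).
  apply: DeriveDef; first exact: ((derivable_mxP _ _ _).1 u_ex ord0 i).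
  by rewrite -du_eq derive_mx // mxE.
have dlog i : is_derive t 1 (fun s => v ord0 i * ln (u s ord0 i))
    (v ord0 i * (du ord0 i / u t ord0 i)).
  apply: is_derive_eq
    (is_deriveZ (v ord0 i) (is_derive1_comp (is_derive1_ln (u_gt0 i)) (du_coord i))) _.
  by rewrite [_ *: _]/(_ * _); congr (_ * _); exact: mulrC.
have -> : cross_entropy v \o u
    = - \sum_(i < n) (fun s => v ord0 i * ln (u s ord0 i)).
  by apply/funext => s; rewrite /= fct_sumE.
exact: is_deriveN (is_derive_sum dlog).
Qed.

End CrossEntropy.

Section CauchySimplexField.
Variables (R : realType) (n : nat) (f : 'rV[R]_n -> R).

Lemma dotv_cs_field_grad_le0 w : simplex w -> dotv (cs_field f w) (grad f w) <= 0.
Proof.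
move=> [w_sum w_ge0]; set g := grad f w; set m := dotv w g.
have centered : \sum_(i < n) w ord0 i * (g ord0 i - m) = 0.
  under eq_bigr do rewrite mulrBr.
  by rewrite sumrB -mulr_suml w_sum mul1r subrr.
have -> : dotv (cs_field f w) g
    = - \sum_(i < n) w ord0 i * (g ord0 i - m) ^+ 2
      - m * \sum_(i < n) w ord0 i * (g ord0 i - m).
  rewrite mulr_sumr -sumrN -sumrB; apply: eq_bigr => i _; rewrite mxE -/g -/m; ring.
rewrite centered mulr0 subr0 oppr_le0; apply: sumr_ge0 => i _.
by rewrite mulr_ge0 ?sqr_ge0.
Qed.

Lemma cs_field_log_ratio v w : simplex v -> simplex_int w ->
  - \sum_(i < n) v ord0 i * (cs_field f w ord0 i / w ord0 i)
  = dotv (v - w) (grad f w).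
Proof.
move=> [v_sum _] [_ w_gt0].
rewrite dotvBl -sumrN -[dotv w _]mul1r -v_sum mulr_suml -sumrB.
apply: eq_bigr => i _; rewrite mxE.
by field; exact: lt0r_neq0.
Qed.

End CauchySimplexField.

Section CauchySimplexLyapunov.
Variables (R : realType) (n : nat) (f : 'rV[R]_n -> R) (v : 'rV[R]_n).
Variables (T : R) (w w' : R -> 'rV[R]_n).
Hypotheses (f_cvx : convex_fun f) (f_diff : forall x, differentiable f x).
Hypothesis v_simplex : simplex v.
Hypothesis w_cont : {within `[0, T], continuous w}.
Hypothesis w_deriv : forall t, 0 < t < T -> is_derive t 1 w (w' t).
Hypothesis w_int : forall t, 0 <= t <= T -> simplex_int (w t).
Hypothesis w_flow : forall t, 0 <= t <= T -> w' t = cs_field f (w t).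

Definition cs_lyapunov (t : R) : R := cross_entropy v (w t) + t * (f (w t) - f v).

Lemma is_derive_cs_lyapunov t : 0 < t < T ->
  is_derive t 1 cs_lyapunov
    (dotv (v - w t) (grad f (w t))
     + (t * dotv (w' t) (grad f (w t)) + (f (w t) - f v))).
Proof.
move=> /[dup] tI /andP[t_gt0 t_ltT].
have tI' : 0 <= t <= T by rewrite !ltW.
have wt_int := w_int tI'; have [_ w_gt0] := wt_int.
have dCE := is_derive_cross_entropy v w_gt0 (w_deriv tI).
have dF := is_deriveB (is_derive_comp_grad (f_diff (w t)) (w_deriv tI))
  (is_derive_cst (f v) t 1).
have dtF := is_deriveM (@is_derive_id _ _ t 1) dF.
apply: is_derive_eq (is_deriveD dCE dtF) _.
by rewrite w_flow // cs_field_log_ratio // /GRing.scale /= subr0 mulr1.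
Qed.

Lemma cs_lyapunov_derive_le0 t : 0 < t < T -> cs_lyapunov^`() t <= 0.
Proof.
move=> /[dup] tI /andP[t_gt0 t_ltT].
have tI' : 0 <= t <= T by rewrite !ltW.
rewrite derive1E; have [_ ->] := is_derive_cs_lyapunov tI.
have grad_le := convex_grad_le v f_cvx (f_diff (w t)).
have flow_le : t * dotv (w' t) (grad f (w t)) <= 0.
  rewrite pmulr_rle0 // w_flow //; apply: dotv_cs_field_grad_le0.
  by have [w_sum w_gt0] := w_int tI'; split=> // i; exact: ltW.
lra.
Qed.

Lemma cs_lyapunov_continuous : {within `[0, T], continuous cs_lyapunov}.
Proof.
rewrite continuous_subspace_in => t; rewrite inE /= in_itv /= => tI.
have [_ w_gt0] := w_int tI.
have wt_cont : {for t, continuous (w : subspace `[0, T] -> _)} by exact: w_cont.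
apply: (continuousD (f := fun s : subspace `[0, T] => cross_entropy v (w s))).
  exact: (@continuous_comp (subspace `[0, T]) _ _ w _ t wt_cont
    (cross_entropy_continuous (v := v) w_gt0)).
apply: (continuousM (s := fun s : subspace `[0, T] => s : R)).
  by apply: (continuous_subspaceT (f := id)) => s; exact: cvg_id.
apply: (continuousB (f := fun s : subspace `[0, T] => f (w s))); last exact: cvg_cst.
exact: (@continuous_comp (subspace `[0, T]) _ _ w f t wt_cont
  (differentiable_continuous (f_diff _))).
Qed.

Lemma cs_lyapunov_nonincreasing :
  {in `[0, T]%R &, {homo cs_lyapunov : s t /~ s <= t}}.
Proof.
apply: (ler0_derive1_le_cc (f := cs_lyapunov)); last exact: cs_lyapunov_continuous.
  by move=> t; rewrite in_itv /= => tI; have [] := is_derive_cs_lyapunov tI.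
by move=> t; rewrite in_itv /= => tI; exact: cs_lyapunov_derive_le0.
Qed.

End CauchySimplexLyapunov.

Theorem theorem4p3 (R : realType) (n : nat) (f : 'rV[R]_n -> R)
  (wstar : 'rV[R]_n) (T : R) (w w' : R -> 'rV[R]_n) :
  convex_fun f -> C1 f ->
  simplex wstar -> (forall v, simplex v -> f wstar <= f v) ->
  0 < T ->
  {within `[0, T], continuous w} ->
  (forall t, 0 < t < T -> is_derive t (1 : R) w (w' t)) ->
  {within `[0, T], continuous w'} ->
  (forall t, 0 <= t <= T -> simplex_int (w t)) ->
  w 0 = const_mx (n%:R)^-1 ->
  (forall t, 0 <= t <= T -> w' t = cs_field f (w t)) ->
  f (w T) - f wstar <= ln (n%:R) / T.
Proof.
move=> f_cvx [f_diff _] wstar_simplex _ T_gt0 w_cont w_deriv _ w_int w0 w_flow.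
have T_ge0 := ltW T_gt0.
have T_mem : T \in `[0, T]%R by rewrite in_itv /= lexx T_ge0.
have O_mem : 0 \in `[0, T]%R by rewrite in_itv /= lexx T_ge0.
have := cs_lyapunov_nonincreasing f_cvx f_diff wstar_simplex w_cont w_deriv w_int w_flow
  T_mem O_mem T_ge0.
rewrite /cs_lyapunov w0 cross_entropy_uniform // mul0r addr0.
have wT_int : simplex_int (w T) by apply: w_int; rewrite lexx T_ge0.
have := cross_entropy_ge0 wstar_simplex wT_int.
rewrite ler_pdivlMr // mulrC; lra.
Qed.
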